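(* Let $p\in\mathbb{R}$ and $K:=\{z=(v,m,\sigma,e)\in Z: v\otimes v-\sigma=e\,\mathrm{Id},\ m=(e+p)v\}$. For any $z_1,z_2\in K$ with $z_1\ne z_2$ one has $z_2-z_1\in\Lambda$.
   Context: $\mathcal S_0^{2\times2}$ is the space of traceless symmetric $2\times2$ matrices, $Z:=\mathbb{R}^2\times\mathbb{R}^2\times\mathcal S_0^{2\times2}\times\mathbb{R}$. The wave cone is $\Lambda=\{\bar z=(\bar v,\bar m,\bar\sigma,\bar e)\in Z:\ (\bar v,\bar e)\neq0\text{ and there is }0\ne(\xi,c)\in\mathbb{R}^2\times\mathbb{R}\text{ with }(\bar\sigma+\bar e\,\mathrm{Id})\xi+c\bar v=0,\ \bar v\cdot\xi=0,\ \bar m\cdot\xi+c\bar e=0\}$. *)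

From HB Require Import structures.
From mathcomp Require Import all_boot all_order all_algebra.
From mathcomp Require Import reals.
Set Implicit Arguments. Unset Strict Implicit. Unset Printing Implicit Defensive.
Import Order.TTheory GRing.Theory Num.Theory.
Local Open Scope ring_scope.

(* Points of Z = R^2 x R^2 x S_0^{2x2} x R, vectors as column vectors. *)
Record zpt (R : realType) := Zpt {
  zv : 'cV[R]_2; zm : 'cV[R]_2; zs : 'M[R]_2; ze : R }.

Definition symtraceless (R : realType) (s : 'M[R]_2) : Prop :=
  s^T = s /\ \tr s = 0.

Definition inZ (R : realType) (z : zpt R) : Prop := symtraceless (zs z).

Definition dotv (R : realType) (u w : 'cV[R]_2) : R := (u^T *m w) 0 0.

Definition zsub (R : realType) (z1 z2 : zpt R) : zpt R :=
  Zpt (zv z1 - zv z2) (zm z1 - zm z2) (zs z1 - zs z2) (ze z1 - ze z2).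

Definition inK (R : realType) (p : R) (z : zpt R) : Prop :=
  inZ z /\ zv z *m (zv z)^T - zs z = (ze z)%:M /\ zm z = (ze z + p) *: zv z.

Definition inLambda (R : realType) (z : zpt R) : Prop :=
  inZ z /\ (zv z != 0 \/ ze z != 0) /\
  exists (xi : 'cV[R]_2) (c : R), (xi != 0 \/ c != 0) /\
    (zs z + (ze z)%:M) *m xi + c *: zv z = 0 /\
    dotv (zv z) xi = 0 /\
    dotv (zm z) xi + c * ze z = 0.

From mathcomp Require Import all_boot all_order all_algebra.
From mathcomp Require Import reals ring.
Import Order.TTheory GRing.Theory Num.Theory.
Local Open Scope ring_scope.

(* A point of K is determined by v: sigma = v v^T - e Id and tr sigma = 0
   force e = |v|^2/2, and then m = (e + p) v.  So z1 <> z2 gives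
   vb := v2 - v1 <> 0 (writing _b for differences), and we take
   xi := vb rotated by a right angle, c := - v1.xi.  As vb.xi = 0 we have
   v1.xi = v2.xi, whence (sigma_b + e_b Id) xi = v2 (v2.xi) - v1 (v1.xi)
   = (v1.xi) vb and m_b.xi = (e2 - e1) (v1.xi) = - c e_b. *)

Section WaveCone.
Context {R : realType} {p : R}.
Implicit Types (u w x : 'cV[R]_2) (z : zpt R).

Lemma ord2_cases (i : 'I_2) : i = 0 \/ i = 1.
Proof. by case: i => [[|[|//]] ?]; [left | right]; apply: val_inj. Qed.

Lemma cV2P u w : u 0 0 = w 0 0 -> u 1 0 = w 1 0 -> u = w.
Proof. by move=> e0 e1; apply/colP => i; case: (ord2_cases i) => ->. Qed.

Lemma dotv2E u x : dotv u x = u 0 0 * x 0 0 + u 1 0 * x 1 0.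
Proof.
rewrite /dotv mxE !big_ord_recl big_ord0 !mxE addr0.
by have -> : lift ord0 ord0 = 1 :> 'I_2 by apply: val_inj.
Qed.

Lemma dotvBl u w x : dotv (u - w) x = dotv u x - dotv w x.
Proof. by rewrite /dotv [(u - w)^T]linearB /= mulmxBl !mxE. Qed.

Lemma dotvZl a u x : dotv (a *: u) x = a * dotv u x.
Proof. by rewrite /dotv [(a *: u)^T]linearZ -scalemxAl mxE. Qed.

Lemma outer_mulmx u x : u *m u^T *m x = dotv u x *: u.
Proof. by rewrite -mulmxA [u^T *m x]mx11_scalar mul_mx_scalar. Qed.

Lemma outerB_mulmx_orth u w x : dotv (w - u) x = 0 ->
  (w *m w^T - u *m u^T) *m x = dotv u x *: (w - u).
Proof.
move=> /eqP; rewrite dotvBl subr_eq0 => /eqP wx.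
by rewrite mulmxBl !outer_mulmx wx scalerBr.
Qed.

Definition rot90 u : 'cV[R]_2 := \col_i (if i == 0 then - u 1 0 else u 0 0).

Lemma dotv_rot90 u : dotv u (rot90 u) = 0.
Proof. by rewrite dotv2E !mxE /= mulrN mulrC addNr. Qed.

Lemma rot90_eq0 u : (rot90 u == 0) = (u == 0).
Proof.
apply/eqP/eqP => [r0|->]; last by apply: cV2P; rewrite !mxE /= ?oppr0.
have r00 := congr1 (fun M : 'cV[R]_2 => M 0 0) r0.
have r10 := congr1 (fun M : 'cV[R]_2 => M 1 0) r0.
move: r00 r10; rewrite !mxE /= => /eqP; rewrite oppr_eq0 => /eqP u1 u0.
by apply: cV2P; rewrite mxE.
Qed.

Lemma inZ_zsub z1 z2 : inZ z1 -> inZ z2 -> inZ (zsub z1 z2).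
Proof. by move=> [s1 t1] [s2 t2]; split; rewrite /= linearB /= ?s1 ?s2 ?t1 ?t2 ?subrr. Qed.

Lemma inK_sigma {z} : inK p z -> zs z = zv z *m (zv z)^T - (ze z)%:M.
Proof. by move=> [_ [<- _]]; rewrite subKr. Qed.

Lemma inK_energy {z} : inK p z -> ze z = dotv (zv z) (zv z) / 2.
Proof.
move=> Kz; have [[_ tr0] _] := Kz.
move: tr0; rewrite (inK_sigma Kz) linearB /= mxtrace_mulC trace_mx11 mxtrace_scalar.
move/eqP; rewrite subr_eq0 /dotv => /eqP ->.
by rewrite -[ze z *+ 2]mulr_natr mulfK // pnatr_eq0.
Qed.

Lemma inK_zv_inj {z1 z2} : inK p z1 -> inK p z2 -> zv z1 = zv z2 -> z1 = z2.
Proof.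
move=> K1 K2 ev.
have ee : ze z1 = ze z2 by rewrite (inK_energy K1) (inK_energy K2) ev.
have es : zs z1 = zs z2 by rewrite (inK_sigma K1) (inK_sigma K2) ev ee.
have em : zm z1 = zm z2 by rewrite K1.2.2 K2.2.2 ev ee.
by case: z1 {K1} ev ee es em => ????; case: z2 {K2} => ???? /= -> -> -> ->.
Qed.

Lemma inK_zsub_wave_eqs {z1 z2 x} : inK p z1 -> inK p z2 ->
  dotv (zv z2 - zv z1) x = 0 ->
  (zs (zsub z2 z1) + (ze (zsub z2 z1))%:M) *m x
    - dotv (zv z1) x *: zv (zsub z2 z1) = 0 /\
  dotv (zm (zsub z2 z1)) x - dotv (zv z1) x * ze (zsub z2 z1) = 0.
Proof.
move=> K1 K2 orth /=.
have outerB : zs z2 - zs z1 + (ze z2 - ze z1)%:M =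
              zv z2 *m (zv z2)^T - zv z1 *m (zv z1)^T.
  rewrite (inK_sigma K1) (inK_sigma K2) [(ze z2 - _)%:M]raddfB -addrA opprB.
  by rewrite [(_ - _) + (_ - _)]addrC subrKA subrKA.
split; first by rewrite outerB outerB_mulmx_orth // subrr.
move/eqP: orth; rewrite dotvBl subr_eq0 => /eqP orth.
by rewrite K1.2.2 K2.2.2 dotvBl !dotvZl orth; ring.
Qed.

End WaveCone.

Theorem lemma2p3 (R : realType) (p : R) (z1 z2 : zpt R) :
  inK p z1 -> inK p z2 -> z1 <> z2 -> inLambda (zsub z2 z1).
Proof.
move=> K1 K2 z12.
have vneq : zv z2 - zv z1 != 0.
  by apply: contra_notN z12; rewrite subr_eq0 => /eqP /esym; exact: inK_zv_inj K1 K2.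
set xi := rot90 (zv z2 - zv z1).
have orth : dotv (zv z2 - zv z1) xi = 0 by apply: dotv_rot90.
have [sigma_eq m_eq] := inK_zsub_wave_eqs K1 K2 orth.
split; first by apply: inZ_zsub; [case: K2 | case: K1].
split; first by left.
exists xi, (- dotv (zv z1) xi); split; first by left; rewrite rot90_eq0.
by rewrite scaleNr mulNr; split.
Qed.
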